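(* Let $\mathbf X$ be a compact metric space and $Y>0$. Consider the on-line regression protocol in which, at each round $n=1,2,\dots$, Reality announces a signal $x_n\in\mathbf X$, then Predictor announces a prediction $\mu_n\in\mathbb R$, then Reality announces an observation $y_n\in[-Y,Y]$. There exists a strategy for Predictor which guarantees that, for every continuous function $F:\mathbf X\to\mathbb R$ and every sequence of moves of Reality, $$\limsup_{N\to\infty}\left(\frac1N\sum_{n=1}^N (y_n-\mu_n)^2-\frac1N\sum_{n=1}^N (y_n-F(x_n))^2\right)\le 0 .$$
   Context: A strategy for Predictor is a function mapping each finite history $(x_1,y_1,\dots,x_{n-1},y_{n-1},x_n)$ to the prediction $\mu_n$; Reality may choose its moves adaptively, and the guarantee must hold for all such choices. *)

From HB Require Import structures.
From mathcomp Require Import all_boot all_order all_algebra.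
From mathcomp Require Import all_classical all_reals all_analysis.
Set Implicit Arguments. Unset Strict Implicit. Unset Printing Implicit Defensive.
Import Order.TTheory GRing.Theory Num.Theory.
Local Open Scope ring_scope.

(* A strategy for Predictor: maps the past history
   [:: (x_1,y_1); ...; (x_{n-1},y_{n-1})] and the current signal x_n
   to the prediction mu_n. *)
Definition strategy (R : realType) (X : Type) := seq (X * R) -> X -> R.

Definition history (R : realType) (X : Type) (x : nat -> X) (y : nat -> R) (n : nat)
  : seq (X * R) := [seq (x i, y i) | i <- iota 0 n].

Definition prediction (R : realType) (X : Type) (S : strategy R X)
  (x : nat -> X) (y : nat -> R) (n : nat) : R := S (history x y n) (x n).

Definition avg_diff (R : realType) (X : Type) (S : strategy R X) (F : X -> R)
  (x : nat -> X) (y : nat -> R) (N : nat) : R :=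
  N%:R^-1 * (\sum_(n < N) (y n - prediction S x y n) ^+ 2)
  - N%:R^-1 * (\sum_(n < N) (y n - F (x n)) ^+ 2).

From HB Require Import structures.
From mathcomp Require Import all_boot all_order all_algebra.
From mathcomp Require Import all_classical all_reals all_analysis.
From mathcomp Require Import zify ring lra.
Import Order.TTheory GRing.Theory Num.Theory numFieldNormedType.Exports.
Local Open Scope ring_scope.
Local Open Scope classical_set_scope.

(* Predictor covers X by finite nets of radius 1/(l+1) and, at a round
   played at level l, predicts the mean of the past observations that fell in
   the same cell of the level-l net (follow the leader on every cell).  By the
   be-the-leader argument its loss exceeds that of the best constant per cell
   by at most 8 Y^2 sum_n 1/(k_n + 1), where k_n counts the earlier visits to
   the cell of round n; this sum is o(N) when the level grows slowly compared
   with the number of cells.  By uniform continuity F is nearly constant on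
   the cells of high levels, and the Cesaro mean of these errors vanishes. *)

Lemma sum_sqr_mean_le (R : realFieldType) (I : Type) (r : seq I) (P : pred I)
    (f : I -> R) (a : R) :
  let n := \sum_(i <- r | P i) (1 : R) in
  n != 0 ->
  \sum_(i <- r | P i) (f i - (\sum_(i <- r | P i) f i) / n) ^+ 2
    <= \sum_(i <- r | P i) (f i - a) ^+ 2.
Proof.
move=> n n0; set m := _ / n.
rewrite -subr_ge0 -sumrB.
have -> : \sum_(i <- r | P i) ((f i - a) ^+ 2 - (f i - m) ^+ 2)
    = \sum_(i <- r | P i) (2 * (m - a) * f i + (a - m) * (m + a) * 1).
  by apply: eq_bigr => i _; ring.
rewrite big_split /= -!mulr_sumr -/n.
have -> : \sum_(i <- r | P i) f i = m * n by rewrite /m divfK.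
have -> : 2 * (m - a) * (m * n) + (a - m) * (m + a) * n = n * (m - a) ^+ 2 by ring.
by rewrite mulr_ge0 ?sqr_ge0 ?sumr_ge0.
Qed.

Lemma sqr_loss_lipschitz (R : realDomainType) (Y M y a b : R) :
  `|y| <= Y -> `|a| <= M -> `|b| <= M ->
  (y - a) ^+ 2 - (y - b) ^+ 2 <= (2 * Y + 2 * M) * `|a - b|.
Proof.
move=> /ler_normlP[? ?] /ler_normlP[? ?] /ler_normlP[? ?].
have -> : (y - a) ^+ 2 - (y - b) ^+ 2 = (b - a) * (2 * y - a - b) by ring.
by case: (lerP 0 (a - b)) => ?; [rewrite ger0_norm | rewrite ltr0_norm]; nra.
Qed.

Lemma limn_esup_le0 (R : realType) (u v : nat -> R) :
  (forall N, u N <= v N) -> v @ \oo --> 0 ->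
  (limn_esup (fun N => (u N)%:E) <= 0)%E.
Proof.
move=> uv v0; apply/lee_addgt0Pr => e e0; rewrite add0e.
have [N1 _ vN1] := cvgr0_norm_lt _ v0 _ e0.
apply: (@le_trans _ _ (ereal_sup ((fun N => (u N)%:E) @` [set N | (N1 <= N)%N]))).
  by apply: ereal_inf_lbound; exists [set N | (N1 <= N)%N] => //; exists N1.
apply: ge_ereal_sup => _ [N N1N <-]; rewrite lee_fin.
by apply: le_trans (uv N) _; apply: le_trans (ltW (vN1 N N1N)); apply: ler_norm.
Qed.

Section CellAverages.
Context {R : realFieldType} (key : nat -> nat).

Definition cell_visits n : nat := \sum_(0 <= s < n | key s == key n) 1%N.

Lemma sum_cell_recr (V : nmodType) (f : nat -> V) n :
  \sum_(0 <= s < n.+1 | key s == key n) f s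
    = \sum_(0 <= s < n | key s == key n) f s + f n.
Proof. by rewrite big_mkcond big_nat_recr //= -big_mkcond eqxx. Qed.

Variable y : nat -> R.

Definition cell_sum n : R := \sum_(0 <= s < n | key s == key n) y s.

(* In a cell visited for the first time the division by zero makes the
   prediction 0. *)
Definition cell_mean n : R := cell_sum n / (cell_visits n)%:R.

Definition cell_mean_incl n : R := (cell_sum n + y n) / (cell_visits n).+1%:R.

(* By induction on [N]: on the cell of round [N] the comparator may be
   replaced by the mean of that cell up to round [N], i.e. by
   [cell_mean_incl N], which minimises the cell's squared loss. *)
Lemma be_the_leader N (c : nat -> R) :
  \sum_(0 <= n < N) (y n - cell_mean_incl n) ^+ 2
    <= \sum_(0 <= n < N) (y n - c (key n)) ^+ 2.
Proof.
elim: N c => [|N IH] c; first by rewrite !big_geq.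
set k := key N; set m := cell_mean_incl N.
pose c' k' := if k' == k then m else c k'.
rewrite big_nat_recr //= [leRHS]big_nat_recr //=.
apply: le_trans (lerD (IH c') (lexx _)) _.
rewrite (bigID (fun n => key n == k)) /= [X in _ <= X + _](bigID (fun n => key n == k)) /=.
have -> : \sum_(0 <= i < N | key i == k) (y i - c' (key i)) ^+ 2 =
          \sum_(0 <= i < N | key i == k) (y i - m) ^+ 2.
  by apply: eq_bigr => i /eqP ->; rewrite /c' eqxx.
have -> : \sum_(0 <= i < N | key i != k) (y i - c' (key i)) ^+ 2 =
          \sum_(0 <= i < N | key i != k) (y i - c (key i)) ^+ 2.
  by apply: eq_bigr => i /negbTE ki; rewrite /c' ki.
have -> : \sum_(0 <= i < N | key i == k) (y i - c (key i)) ^+ 2 =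
          \sum_(0 <= i < N | key i == k) (y i - c k) ^+ 2.
  by apply: eq_bigr => i /eqP ->.
have visitsE : (cell_visits N).+1%:R = \sum_(0 <= s < N.+1 | key s == k) (1 : R).
  by rewrite sum_cell_recr /cell_visits -addn1 natrD natr_sum.
have := @sum_sqr_mean_le R _ (index_iota 0 N.+1) (fun s => key s == k) y (c k).
rewrite /= -visitsE pnatr_eq0 /= !sum_cell_recr.
have <- : m = (\sum_(0 <= s < N | key s == k) y s + y N) / (cell_visits N).+1%:R by [].
move=> /(_ isT); rewrite -/k -/m.
lra.
Qed.

Context {Y : R} (y_bound : forall n, `|y n| <= Y).

Lemma norm_cell_sum_le n : `|cell_sum n| <= (cell_visits n)%:R * Y.
Proof.
rewrite /cell_sum /cell_visits natr_sum mulr_suml.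
apply: le_trans (ler_norm_sum _ _ _) _.
by apply: ler_sum => i _; rewrite mul1r.
Qed.

Lemma cell_sumE n : cell_sum n = (cell_visits n)%:R * cell_mean n.
Proof.
have [v0|v0] := eqVneq (cell_visits n)%:R (0 : R); last by rewrite mulrC divfK.
by apply/eqP; rewrite v0 mul0r -normr_le0 -(mul0r Y) -v0 norm_cell_sum_le.
Qed.

Lemma norm_cell_mean_le n : `|cell_mean n| <= Y.
Proof.
have Y0 : 0 <= Y by apply: le_trans (y_bound n).
have [v0|v0] := eqVneq (cell_visits n)%:R (0 : R).
  by rewrite /cell_mean v0 invr0 mulr0 normr0.
rewrite /cell_mean normrM normfV normr_nat ler_pdivrMr ?lt0r ?v0 ?ler0n //.
by rewrite mulrC norm_cell_sum_le.
Qed.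

(* [y n - cell_mean_incl n] is [y n - cell_mean n] scaled by
   [visits / visits.+1]. *)
Lemma cell_mean_step n :
  (y n - cell_mean n) ^+ 2 - (y n - cell_mean_incl n) ^+ 2
    <= 8 * Y ^+ 2 / (cell_visits n).+1%:R.
Proof.
set c : R := (cell_visits n)%:R; set a := cell_mean n.
have c0 : 0 <= c by [].
have cS : (cell_visits n).+1%:R = c + 1 by rewrite -addn1 natrD.
have inclE : y n - cell_mean_incl n = (y n - a) * (1 - (c + 1)^-1).
  by rewrite /cell_mean_incl cell_sumE -/c -/a cS; field; lra.
have ya : (y n - a) ^+ 2 <= 4 * Y ^+ 2.
  have := y_bound n; have := norm_cell_mean_le n; rewrite -/a.
  move=> /ler_normlP[? ?] /ler_normlP[? ?]; nra.
rewrite inclE exprMn cS.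
have d0 : 0 < (c + 1)^-1 by rewrite invr_gt0; lra.
have d1 : (c + 1)^-1 <= 1 by rewrite invf_le1; lra.
move: d0 d1 (sqr_ge0 (y n - a)) ya; move: (c + 1)^-1 ((y n - a) ^+ 2) => d u d0 d1 u0 ya.
nra.
Qed.

Lemma cell_mean_regret N (c f : nat -> R) :
  \sum_(0 <= n < N) (y n - cell_mean n) ^+ 2 - \sum_(0 <= n < N) (y n - f n) ^+ 2
    <= 8 * Y ^+ 2 * \sum_(0 <= n < N) ((cell_visits n).+1%:R)^-1
       + \sum_(0 <= n < N) ((y n - c (key n)) ^+ 2 - (y n - f n) ^+ 2).
Proof.
have := be_the_leader N c.
have : \sum_(0 <= n < N) ((y n - cell_mean n) ^+ 2 - (y n - cell_mean_incl n) ^+ 2)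
    <= \sum_(0 <= n < N) (8 * Y ^+ 2 / (cell_visits n).+1%:R).
  by apply: ler_sum => n _; exact: cell_mean_step.
rewrite !sumrB -mulr_sumr; lra.
Qed.

End CellAverages.

Section VisitCounts.
Variable key : nat -> nat.
Local Open Scope nat_scope.

Lemma count_early_visits_cell k K N :
  \sum_(0 <= n < N | key n == k) (cell_visits key n < K)
    = minn K (\sum_(0 <= n < N | key n == k) 1).
Proof.
elim: N => [|N IH]; first by rewrite !big_geq // minn0.
rewrite big_mkcond big_nat_recr //= -big_mkcond IH.
rewrite [in RHS]big_mkcond big_nat_recr //= -big_mkcond.
have [<-|_] /= := eqVneq (key N) k; last by rewrite !addn0.
rewrite /cell_visits; case: ltnP => ? /=; lia.
Qed.

Lemma count_early_visits K B N : (forall n, n < N -> key n < B) ->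
  \sum_(0 <= n < N) (cell_visits key n < K) <= K * B.
Proof.
move=> keyB.
have -> : \sum_(0 <= n < N) (cell_visits key n < K) =
    \sum_(0 <= k < B) \sum_(0 <= n < N | key n == k) (cell_visits key n < K).
  under [RHS]eq_bigr do rewrite big_mkcond.
  rewrite exchange_big_nat /=; apply: eq_big_nat => n /andP[_ nN].
  rewrite -big_mkcond /= (eq_bigl (fun k => k == key n)) => [|k]; last exact: eq_sym.
  by rewrite big_nat1_eq /= keyB.
apply: (@leq_trans (\sum_(0 <= k < B) K)).
  by apply: leq_sum => k _; rewrite count_early_visits_cell geq_minl.
by rewrite sum_nat_const_nat subn0 mulnC.
Qed.

End VisitCounts.

(* Rounds whose cell was visited fewer than [K] times before contribute at
   most [1] each and there are at most [K * B] of them; all the others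
   contribute at most [1 / K]. *)
Lemma sum_inv_visits_le (R : realFieldType) (key : nat -> nat) (K B N : nat) :
  (0 < K)%N -> (forall n, (n < N)%N -> (key n < B)%N) ->
  \sum_(0 <= n < N) ((cell_visits key n).+1%:R : R)^-1 <= (K * B)%:R + N%:R / K%:R.
Proof.
move=> K0 keyB.
have Kp : (0 : R) < K%:R by rewrite ltr0n.
apply: (@le_trans _ _ (\sum_(0 <= n < N) (((cell_visits key n < K)%N : nat)%:R + K%:R^-1))).
  apply: ler_sum => n _; case: ltnP => h /=.
    by rewrite ler_wpDr ?invr_ge0 ?ler0n // invf_le1 ?ler1n ?ltr0n.
  by rewrite add0r lef_pV2 ?posrE ?ltr0n // ler_nat ltnW.
rewrite big_split /= -natr_sum sumr_const_nat subn0 mulr_natl.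
by rewrite lerD // ler_nat count_early_visits.
Qed.

Section Levels.
Variable B : nat -> nat.
Local Open Scope nat_scope.

(* When [B J] bounds the cell indices of all
   the levels up to [J], the condition [J.+1 ^ 2 * B J <= n] makes the term
   [K * B] of [sum_inv_visits_le] (with [K := J.+1]) at most [n / J.+1]. *)
Definition level n := \max_(J <- index_iota 0 n.+1 | J.+1 ^ 2 * B J <= n) J.

Lemma level_ge J n : J <= n -> J.+1 ^ 2 * B J <= n -> J <= level n.
Proof. by move=> Jn JB; apply: leq_bigmax_seq => //; rewrite mem_index_iota. Qed.

Lemma level_le m n : m <= n -> level m <= level n.
Proof.
move=> mn; apply/bigmax_leqP_seq => J; rewrite mem_index_iota => /andP[_ Jm] JB.
by apply: level_ge; lia.
Qed.

Lemma level_spec n : level n = 0 \/ (level n).+1 ^ 2 * B (level n) <= n.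
Proof.
apply: (big_ind (fun J => J = 0 \/ J.+1 ^ 2 * B J <= n)) => [|a b Ha Hb|J JB].
- by left.
- by rewrite /maxn; case: ltnP.
- by right.
Qed.

Lemma level_cvg : level @ \oo --> \oo.
Proof.
apply/cvgnyPge => J; exists (maxn J (J.+1 ^ 2 * B J)) => // n /=.
by rewrite geq_max => /andP[]; exact: level_ge.
Qed.

End Levels.

Lemma sum_inv_visits_level (R : realFieldType) (B key : nat -> nat) N :
  (forall n, (n < N)%N -> (key n < B (level B N))%N) ->
  \sum_(0 <= n < N) ((cell_visits key n).+1%:R : R)^-1 <= 2 * N%:R * harmonic (level B N).
Proof.
move=> keyB; rewrite /harmonic /=.
case: (level_spec B N) => [->|JB].
  apply: (@le_trans _ _ (\sum_(0 <= n < N) (1 : R))).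
    by apply: ler_sum => n _; rewrite invf_le1 ?ler1n ?ltr0n.
  rewrite sumr_const_nat subn0 invr1 mulr1 mulr_natl.
  have : (0 : R) <= N%:R by []; lra.
set J := level B N in keyB JB *.
have Jp : (0 : R) < J.+1%:R by rewrite ltr0n.
apply: le_trans (@sum_inv_visits_le R key J.+1 (B J) N (ltn0Sn J) keyB) _.
have : ((J.+1 * B J)%:R : R) <= N%:R / J.+1%:R.
  by rewrite ler_pdivlMr // -natrM ler_nat; nia.
rewrite -mulrA; move: (_ * _)%:R (N%:R / _) => a b; lra.
Qed.

Definition cell_strategy {R : realType} {X : Type} (key : nat -> X -> nat)
    : strategy R X :=
  fun h x =>
    (\sum_(0 <= s < size h | key s (nth (x, 0) h s).1 == key (size h) x)
        (nth (x, 0) h s).2) /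
    (\sum_(0 <= s < size h | key s (nth (x, 0) h s).1 == key (size h) x) 1).

Lemma prediction_cell_strategy (R : realType) (X : Type) (key : nat -> X -> nat)
    (x : nat -> X) (y : nat -> R) n :
  prediction (cell_strategy key) x y n = cell_mean (fun s => key s (x s)) y n.
Proof.
have size_h : size (history x y n) = n by rewrite size_map size_iota.
have nth_h s d : (s < n)%N -> nth d (history x y n) s = (x s, y s).
  by move=> sn; rewrite (nth_map 0%N) ?size_iota // nth_iota.
rewrite /prediction /cell_strategy /cell_mean /cell_sum /cell_visits size_h natr_sum.
by congr (_ / _); rewrite [LHS]big_mkcond [RHS]big_mkcond;
  apply: eq_big_nat => s /andP[_ sn]; rewrite nth_h.
Qed.

Definition superseqs (T : eqType) : set_system (seq T) :=
  fun A => exists s0 : seq T, forall s, {subset s0 <= s} -> A s.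

Lemma superseqs_filter (T : eqType) : Filter (@superseqs T).
Proof.
constructor; first by exists [::].
  move=> A B [s0 hA] [s1 hB]; exists (s0 ++ s1) => s hs; split.
    by apply: hA => z zs; apply: hs; rewrite mem_cat zs.
  by apply: hB => z zs; apply: hs; rewrite mem_cat zs orbT.
by move=> A B AB [s0 hA]; exists s0 => s ss; apply: AB; exact: hA.
Qed.

Section CompactQuantization.
Context {R : realType} {X : metricType R} (hX : compact [set: X]).

(* A finite sequence containing [x] covers the ball around [x], so
   compactness yields a single sequence covering everything. *)
Lemma finite_net (e : R) : 0 < e ->
  exists s : seq X, forall x, exists2 p, p \in s & ball p e x.
Proof.
move=> e0.
have := (compact_near_coveringP [set: X]).1 hX (seq X) (@superseqs X)
  (fun s x => exists2 p, p \in s & ball p e x) (@superseqs_filter X).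
case=> [x _|s0 hs0].
  exists (ball x e, [set s : seq X | x \in s]) => /=; first split.
  - exact: nbhsx_ballx.
  - by exists [:: x] => s; apply; rewrite mem_seq1.
  - by move=> [x' s] /= [bx xs]; exists x.
by exists s0 => x; apply: (hs0 s0 (fun z zs => zs) x).
Qed.

Section ContinuousFunction.
Context {F : X -> R} (F_cont : continuous F).

Lemma continuous_bounded : exists M, forall p, `|F p| <= M.
Proof.
have /compact_bounded[M [_ FM]] : compact (F @` [set: X]).
  by apply: continuous_compact => //; apply: continuous_subspaceT.
by exists (M + 1) => p; apply: FM; [lra | exists p].
Qed.

Lemma continuous_ball (x : X) (e : R) : 0 < e ->
  exists2 r, 0 < r & forall x', ball x r x' -> `|F x - F x'| < e.
Proof.
move=> e0; have [r r0 hr] := (nbhs_ballP x _).1 (cvg_ball (F_cont x) e0).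
by exists r.
Qed.

(* Heine's theorem, through [compact_near_coveringP] with the filter of small
   positive radii. *)
Lemma continuous_unif (e : R) : 0 < e ->
  exists2 d, 0 < d & forall p q, ball p d q -> `|F p - F q| < e.
Proof.
move=> e0.
have e2 : 0 < e / 2 by rewrite divr_gt0.
have : \forall d \near (0:R)^'+, [set: X] `<=`
    (fun p => forall q, ball p d q -> `|F p - F q| < e).
  apply: ((compact_near_coveringP [set: X]).1 hX R (0 : R)^'+
    (fun d p => forall q, ball p d q -> `|F p - F q| < e)) => p _.
  have [r r0 hr] := continuous_ball p (e / 2) e2.
  have r2 : 0 < r / 2 by rewrite divr_gt0.
  exists (ball p (r / 2), [set d : R | 0 < d /\ d < r / 2]) => /=; first split.
  - exact: nbhsx_ballx.
  - near=> d; split; near: d; [exact: nbhs_right_gt | exact: nbhs_right_lt].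
  - move=> [p' d] /= [bp [d0 dr]] q bq.
    have h1 := hr p' (le_ball (_ : r / 2 <= r) bp).
    have h2 := hr q (le_ball (_ : r / 2 + d <= r) (ball_triangle bp bq)).
    have := ler_distD (F p) (F p') (F q).
    rewrite distrC in h1; lra.
move=> H; near (0:R)^'+ => d.
exists d; first by near: d; exact: nbhs_right_gt.
by move=> p q; apply: (near H d).
Unshelve. all: by end_near.
Qed.

End ContinuousFunction.

Definition net l : seq X := proj1_sig (cid (finite_net _ (@harmonic_gt0 R l))).

Lemma net_cover l x : exists p, p \in net l /\ ball p (harmonic l) x.
Proof.
by have [p ? ?] := proj2_sig (cid (finite_net _ (@harmonic_gt0 R l))) x; exists p.
Qed.

Definition center l x : X := proj1_sig (cid (net_cover l x)).

Lemma center_in_net l x : center l x \in net l.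
Proof. exact: (proj2_sig (cid (net_cover l x))).1. Qed.

Lemma ball_center l x : ball (center l x) (harmonic l) x.
Proof. exact: (proj2_sig (cid (net_cover l x))).2. Qed.

(* Cells of all levels are numbered jointly, through [pickle]. *)
Definition cell l x : nat := pickle (l, index (center l x) (net l)).

Definition cell_bound J : nat :=
  \max_(l < J.+1) \max_(i < size (net l)) (pickle (l, val i)).+1.

Lemma cell_lt_bound l J x : (l <= J)%N -> (cell l x < cell_bound J)%N.
Proof.
move=> lJ.
have ilt : (index (center l x) (net l) < size (net l))%N.
  by rewrite index_mem center_in_net.
apply: leq_trans (leq_bigmax (F := fun i : 'I_(size (net l)) =>
  (pickle (l, val i)).+1) (Ordinal ilt)) _.
exact: (leq_bigmax (F := fun l : 'I_J.+1 =>
  \max_(i < size (net l)) (pickle (l : nat, val i)).+1) (Ordinal (lJ : (l < J.+1)%N))).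
Qed.

Definition cell_value (F : X -> R) (x0 : X) (k : nat) : R :=
  if unpickle k is Some (l, i) then F (nth x0 (net l) i) else 0.

Lemma cell_value_cell F x0 l x : cell_value F x0 (cell l x) = F (center l x).
Proof. by rewrite /cell_value /cell pickleK nth_index ?center_in_net. Qed.

Definition predictor : strategy R X :=
  cell_strategy (fun s => cell (level cell_bound s)).

Section PredictorRegret.
Context {F : X -> R} {M Y : R} {x : nat -> X} {y : nat -> R}.
Hypotheses (F_cont : continuous F) (F_bound : forall p, `|F p| <= M).
Hypothesis y_bound : forall n, `|y n| <= Y.

Local Notation lev := (level cell_bound).

Definition approx_gap n : R := `|F (center (lev n) (x n)) - F (x n)|.

Definition regret_bound N : R :=
  16 * Y ^+ 2 * harmonic (lev N)
  + (2 * Y + 2 * M) * (N%:R^-1 * \sum_(0 <= n < N) approx_gap n).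

Lemma avg_diff_predictor_le N : avg_diff predictor F x y N <= regret_bound N.
Proof.
pose key n := cell (lev n) (x n).
have keyB n : (n < N)%N -> (key n < cell_bound (lev N))%N.
  by move=> nN; apply: cell_lt_bound; apply: level_le; exact: ltnW.
have regret := cell_mean_regret key y y_bound N (cell_value F (x 0%N)) (F \o x).
have visits := @sum_inv_visits_level R _ _ _ keyB.
have approx : \sum_(0 <= n < N) ((y n - cell_value F (x 0%N) (key n)) ^+ 2 - (y n - F (x n)) ^+ 2)
    <= (2 * Y + 2 * M) * \sum_(0 <= n < N) approx_gap n.
  rewrite mulr_sumr; apply: ler_sum => n _; rewrite cell_value_cell.
  exact: sqr_loss_lipschitz.
have N1 : N%:R^-1 * N%:R <= 1 :> R.
  by have [->|N0] := eqVneq N 0%N; rewrite ?mul0r // mulVf // pnatr_eq0.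
have ordE (f : nat -> R) : \sum_(n < N) f n = \sum_(0 <= n < N) f n.
  by rewrite big_mkord.
rewrite /avg_diff -mulrBr (ordE (fun n => (y n - prediction predictor x y n) ^+ 2))
  (ordE (fun n => (y n - F (x n)) ^+ 2)).
under eq_bigr do rewrite /predictor prediction_cell_strategy -/(key _).
have Ninv0 : 0 <= N%:R^-1 :> R by rewrite invr_ge0.
have Y8 : 0 <= 8 * Y ^+ 2 by rewrite mulr_ge0 ?sqr_ge0.
apply: le_trans (ler_wpM2l Ninv0 (le_trans regret (lerD (ler_wpM2l Y8 visits) approx))) _.
rewrite /regret_bound mulrDr [X in _ + X]mulrCA lerD2r.
have -> : N%:R^-1 * (8 * Y ^+ 2 * (2 * N%:R * harmonic (lev N)))
    = 16 * Y ^+ 2 * harmonic (lev N) * (N%:R^-1 * N%:R) by ring.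
by rewrite ler_piMr // mulr_ge0 ?harmonic_ge0 // mulr_ge0 ?sqr_ge0.
Qed.

Lemma approx_gap_cvg0 : approx_gap @ \oo --> 0.
Proof.
apply/cvgr0Pnorm_lt => e e0.
have [d d0 Fd] := continuous_unif F_cont _ e0.
have : \forall n \near \oo, `|harmonic (lev n)| < d.
  exact: cvgr0_norm_lt _ (cvg_comp _ _ (level_cvg _) cvg_harmonic) _ d0.
apply: filterS => n; rewrite ger0_norm ?harmonic_ge0 // normr_id => hn.
by apply: Fd; apply: le_ball (ball_center _ _); exact: ltW.
Qed.

Lemma regret_bound_cvg0 : regret_bound @ \oo --> 0.
Proof.
have mean_cvg0 : (fun N => N%:R^-1 * \sum_(0 <= n < N) approx_gap n) @ \oo --> 0.
  by rewrite -cvg_shiftS; exact: cesaro approx_gap_cvg0.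
have -> : 0 = 16 * Y ^+ 2 * 0 + (2 * Y + 2 * M) * 0 :> R by rewrite !mulr0 addr0.
apply: cvgD; apply: cvgM; rewrite ?mean_cvg0 //; try exact: cvg_cst.
exact: cvg_comp _ _ (level_cvg _) cvg_harmonic.
Qed.

End PredictorRegret.

End CompactQuantization.

Theorem theorem1 (R : realType) (X : metricType R) (hX : compact [set: X])
  (Y : R) (hY : 0 < Y) :
  exists S : strategy R X,
    forall (F : X -> R), continuous F ->
    forall (x : nat -> X) (y : nat -> R), (forall n, `|y n| <= Y) ->
      (limn_esup (fun N => (avg_diff S F x y N)%:E) <= 0)%E.
Proof.
exists (predictor hX) => F F_cont x y y_bound.
have [M F_bound] := continuous_bounded hX F_cont.
apply: limn_esup_le0 (avg_diff_predictor_le hX F_bound y_bound) _.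
exact: regret_bound_cvg0.
Qed.
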